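(* In the graph process described in the context, for every $v\in[n]$, $$\bigl|\{u\in[n]: d_{H^{(q)}}(v,u)<h\}\bigr|\le 2\delta^{h-1}n.$$
   Context: Fix integers $n\ge1$, $h\ge2$, a real $\delta\in(0,1)$ with $\delta n^{1/(h-1)}>3$, and $S=\{1,\ldots,\lfloor\delta n\rfloor\}\subseteq[n]$. Let $(a_1,b_1),\ldots,(a_q,b_q)$ be a sequence of unordered pairs of distinct points of $[n]$, no pair repeated. All graphs are unweighted undirected on vertex set $[n]$; $d_G$ is the shortest-path (edge-count) distance ($\infty$ if disconnected), $\deg_G$ the degree. Graph process: $E_G^{(0)}=\{(u,v): u,v\in[n]\setminus S, u\ne v\}$, $E_H^{(0)}=\emptyset$, $G^{(i)}=([n],E_G^{(i)})$, $H^{(i)}=([n],E_H^{(i)})$. For $i=1,\ldots,q$: if $d_{G^{(i-1)}}(a_i,b_i)\le h$, choose a shortest $a_i$-$b_i$ path $P_i$ in $G^{(i-1)}$, set $E_H^{(i)}=E_H^{(i-1)}\cup\{\text{edges of }P_i\}$ and $E_G^{(i)}=E_G^{(i-1)}\setminus\{(u,v)\in E_G^{(i-1)}\setminus E_H^{(i)}: \deg_{H^{(i)}}(u)\ge\delta n^{1/(h-1)}-2\text{ or }\deg_{H^{(i)}}(v)\ge\delta n^{1/(h-1)}-2\}$; otherwise set $E_H^{(i)}=E_H^{(i-1)}$, $E_G^{(i)}=E_G^{(i-1)}$. *)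

From Stdlib Require Import Reals.
From mathcomp Require Import all_boot.

(* Stdlib's R_scope key %R is taken over by mathcomp; use %Re for reals. *)
Delimit Scope R_scope with Re.

Set Implicit Arguments.
Unset Strict Implicit.
Unset Printing Implicit Defensive.

(* Vertex set [n] = {1,...,n} is represented by 'I_n; ordinal i stands for i+1.
   An (undirected, simple) edge set is a set of 2-element vertex sets. *)
Definition edgeset (n : nat) := {set {set 'I_n}}.

Definition adj n (E : edgeset n) : rel 'I_n :=
  fun x y => (x != y) && ([set x; y] \in E).

(* p is a walk from a to b in E; its length (number of edges) is size p *)
Definition is_walk n (E : edgeset n) (a b : 'I_n) (p : seq 'I_n) : bool :=
  path (adj E) a p && (last a p == b).

(* d_E(a,b) <= k  (false when a, b are disconnected) *)
Definition dist_le n (E : edgeset n) (a b : 'I_n) (k : nat) : bool :=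
  [exists j : 'I_k.+1, [exists p : j.-tuple 'I_n, is_walk E a b p]].

Definition dist_lt n (E : edgeset n) (a b : 'I_n) (k : nat) : bool :=
  [exists j : 'I_k, [exists p : j.-tuple 'I_n, is_walk E a b p]].

Definition shortest_path n (E : edgeset n) (a b : 'I_n) (p : seq 'I_n) : Prop :=
  is_walk E a b p /\ forall p' : seq 'I_n, is_walk E a b p' -> size p <= size p'.

Definition path_edges n (a : 'I_n) (p : seq 'I_n) : edgeset n :=
  [set:: [seq [set xy.1; xy.2] | xy <- zip (a :: p) p]].

Definition deg n (E : edgeset n) (u : 'I_n) : nat :=
  #|[set w | (w != u) && ([set u; w] \in E)]|.

(* S = {1, ..., floor(delta n)}: vertex i (standing for i+1) is in S iff i < floor(delta n) *)
Definition floorS (n : nat) (delta : R) : nat := Z.to_nat (Int_part (delta * INR n)).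

Definition inS n (delta : R) (u : 'I_n) : bool := (nat_of_ord u < floorS n delta)%N.

Definition G0 n (delta : R) : edgeset n :=
  [set e : {set 'I_n} | (#|e| == 2)%N && [forall u in e, ~~ inS delta u]].

Definition thr (n h : nat) (delta : R) : R :=
  (delta * Rpower (INR n) (/ INR (h - 1)))%Re.

(* One step i of the process, with pair (a,b): (G,H) = (G^(i-1),H^(i-1)),
   (G',H') = (G^(i),H^(i)).  The shortest path P_i is an arbitrary choice. *)
Definition step n (h : nat) (delta : R) (ab : 'I_n * 'I_n)
  (G H G' H' : edgeset n) : Prop :=
  if dist_le G ab.1 ab.2 h then
    exists p : seq 'I_n,
      shortest_path G ab.1 ab.2 p /\
      H' = H :|: path_edges ab.1 p /\
      (forall e : {set 'I_n}, e \in G' <->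
         (e \in G /\
          ~ (e \notin H' /\
             exists u : 'I_n, u \in e /\ (thr n h delta - 2 <= INR (deg H' u))%Re)))
  else G' = G /\ H' = H.

Definition process n (h : nat) (delta : R) (ps : seq ('I_n * 'I_n))
  (Gs Hs : nat -> edgeset n) : Prop :=
  Gs 0%N = G0 n delta /\ Hs 0%N = set0 /\
  forall (i : nat) (ab : 'I_n * 'I_n), onth ps i = Some ab ->
    step h delta ab (Gs i) (Hs i) (Gs i.+1) (Hs i.+1).

(* A vertex becomes saturated once its H-degree reaches thr - 2; from then on
   every G-edge at it already lies in H, so shortest paths of later steps add
   no new H-edges at it.  Before that, one step adds at most two H-edges at a
   vertex, because a shortest path is simple.  Hence every H-degree stays below
   T := thr = delta n^(1/(h-1)), and a ball of radius h - 1 in a graph of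
   maximum degree < T has fewer than 2 T^(h-1) = 2 delta^(h-1) n vertices. *)
From Stdlib Require Import Reals Lra.
From mathcomp Require Import all_boot.

Set Implicit Arguments.
Unset Strict Implicit.
Unset Printing Implicit Defensive.

Definition neighbours n (E : edgeset n) (u : 'I_n) : {set 'I_n} :=
  [set w | (w != u) && ([set u; w] \in E)].

Definition ball n (E : edgeset n) (v : 'I_n) (m : nat) : {set 'I_n} :=
  [set u | dist_lt E v u m].

Lemma in_ball n (E : edgeset n) v m u :
  u \in ball E v m <-> exists p, is_walk E v u p /\ size p < m.
Proof.
rewrite inE; split.
  by case/existsP=> j /existsP [p Hp]; exists p; rewrite size_tuple.
case=> p [Hp Hs]; apply/existsP; exists (Ordinal Hs); apply/existsP.
by exists (in_tuple p).
Qed.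

Lemma shorten_path (T : eqType) (e : rel T) x p :
  path e x p -> ~~ uniq (x :: p) ->
  exists p', [/\ path e x p', last x p' = last x p & size p' < size p].
Proof.
elim: p x => [|y p IH] x Hp //.
rewrite cons_uniq negb_and negbK => /orP [Hx | Hu].
  case/splitPr: Hx Hp => p1 p2; rewrite cat_path /= => /and3P [_ _ Hp2].
  exists p2; split; first by [].
    by rewrite last_cat.
  by rewrite size_cat /= addnS ltnS leq_addl.
case/andP: Hp => exy Hp.
have [p' [H1 H2 H3]] := IH y Hp Hu.
by exists (y :: p'); rewrite /= exy H1 H2 ltnS.
Qed.

Lemma shortest_path_uniq n (E : edgeset n) a b p :
  shortest_path E a b p -> uniq (a :: p).
Proof.
case=> /andP [Hp Hl] Hmin; apply/negPn/negP => /(shorten_path Hp).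
case=> p' [H1 H2 H3].
by have := Hmin p'; rewrite /is_walk H1 H2 Hl leqNgt H3 => /(_ isT).
Qed.

Lemma path_edgesP n (a : 'I_n) p e : e \in path_edges a p ->
  exists2 k, k < size p & e = [set nth a (a :: p) k; nth a (a :: p) k.+1].
Proof.
rewrite inE => /mapP [xy /(nthP (a, a)) [k Hk <-] ->].
have Hs : size (zip (a :: p) p) = size p by rewrite size_zip /= (minn_idPr _).
rewrite Hs in Hk; exists k => //.
by rewrite nth_zip_cond Hs Hk.
Qed.

Lemma path_edges_sub n (E : edgeset n) a p :
  path (adj E) a p -> path_edges a p \subset E.
Proof.
move=> /(pathP a) Hp; apply/subsetP => e /path_edgesP [k Hk ->].
by case/andP: (Hp k Hk).
Qed.

Lemma set2_inj (T : finType) (u w x y : T) : u != w ->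
  [set u; w] = [set x; y] -> (u = x /\ w = y) \/ (u = y /\ w = x).
Proof.
move=> Huw He.
have /set2P Hu : u \in [set x; y] by rewrite -He set21.
have /set2P Hw : w \in [set x; y] by rewrite -He set22.
by case: Hu Hw Huw => -> [] ->; rewrite ?eqxx; auto.
Qed.

(* A simple path meets u only at position i, so u's neighbours along it are
   its predecessor and successor. *)
Lemma card_neighbours_path_edges n (a : 'I_n) p u :
  uniq (a :: p) -> #|neighbours (path_edges a p) u| <= 2.
Proof.
move=> Hu; set s := a :: p; set i := index u s.
suff /subset_leq_card : neighbours (path_edges a p) u
    \subset [set nth a s i.+1; nth a s i.-1].
  by move/leq_trans; apply; rewrite cards2; case: (_ != _).
apply/subsetP => w; rewrite inE => /andP [Hwu /path_edgesP [k Hk He]].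
have Hks : k < size s by rewrite /= ltnS ltnW.
have Hk1 : k.+1 < size s by rewrite /= ltnS.
case: (set2_inj _ He); rewrite 1?eq_sym // => -[Hu1 ->]; apply/set2P.
  by left; rewrite /i Hu1 index_uniq.
by right; rewrite /i Hu1 index_uniq.
Qed.

Lemma neighboursU n (E F : edgeset n) u :
  neighbours (E :|: F) u = neighbours E u :|: neighbours F u.
Proof. by apply/setP => w; rewrite !inE; case: (w != u). Qed.

Lemma deg_setU_le n (E F : edgeset n) u :
  deg (E :|: F) u <= deg E u + #|neighbours F u|.
Proof. by rewrite /deg -/(neighbours _ _) neighboursU cardsU leq_subr. Qed.

Lemma deg_setU_id n (E F : edgeset n) u :
  neighbours F u \subset neighbours E u -> deg (E :|: F) u = deg E u.
Proof. by rewrite /deg -/(neighbours _ _) neighboursU => /setUidPl ->. Qed.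

Lemma card_bigcup_le (T I : finType) (A : {pred I}) (F : I -> {set T}) :
  #|\bigcup_(x in A) F x| <= \sum_(x in A) #|F x|.
Proof.
elim/big_ind2: _ => [|X1 m1 X2 m2 H1 H2|//]; first by rewrite cards0.
by rewrite cardsU (leq_trans (leq_subr _ _)) ?leq_add.
Qed.

Lemma card_ball1 n (E : edgeset n) v : #|ball E v 1| <= 1.
Proof.
suff /subset_leq_card : ball E v 1 \subset [set v] by rewrite cards1.
apply/subsetP => u.
by case/in_ball=> -[|? ?] [/andP [_ /eqP <-]] //; rewrite set11.
Qed.

Lemma card_ballS n (E : edgeset n) v m D : (forall x, deg E x <= D) ->
  #|ball E v m.+2| <= 1 + D * #|ball E v m.+1|.
Proof.
move=> HD.
have : ball E v m.+2 \subset v |: \bigcup_(x in ball E v m.+1) neighbours E x.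
  apply/subsetP => u /in_ball [p [/andP [Hp /eqP <-] Hs]].
  case/lastP: p Hp Hs => [_ _ | q y]; first by rewrite setU11.
  rewrite rcons_path last_rcons size_rcons ltnS => /andP [Hq /andP [Hne HE]] Hs.
  apply/setU1P; right; apply/bigcupP; exists (last v q).
    by apply/in_ball; exists q; rewrite /is_walk Hq eqxx.
  by rewrite inE eq_sym Hne HE.
move/subset_leq_card/leq_trans; apply; rewrite cardsU1; apply: leq_add.
  by case: (_ \notin _).
apply: leq_trans (card_bigcup_le _ _) _.
by rewrite mulnC -sum_nat_const; apply: leq_sum => x _; apply: HD.
Qed.

Lemma card_ball_le n (E : edgeset n) v (T : R) :
  (forall x, INR (deg E x) <= T)%Re -> (2 <= T)%Re ->
  forall m, (INR #|ball E v m.+1| <= 2 * T ^ m - 1)%Re.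
Proof.
move=> Hdeg HT.
have Hc : 0 < #|'I_n| by rewrite card_ord; case: n v {Hdeg E} => [[]|].
have [x0 Hx0] := eq_bigmax (deg E) Hc.
set D := \max_x deg E x in Hx0.
have HD x : deg E x <= D by exact: leq_bigmax.
have HDT : (INR D <= T)%Re by rewrite Hx0.
elim => [|m IH].
  by have /leP /le_INR /= := card_ball1 E v; lra.
have Hs : (INR #|ball E v m.+2| <= 1 + INR D * INR #|ball E v m.+1|)%Re.
  by rewrite Rplus_comm -mult_INR -S_INR; apply/le_INR/leP/card_ballS.
have : (INR D * INR #|ball E v m.+1| <= T * (2 * T ^ m - 1))%Re.
  by apply: Rmult_le_compat => //; apply: pos_INR.
have -> : (T * (2 * T ^ m - 1) = 2 * (T * T ^ m) - T)%Re by ring.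
change (T ^ m.+1)%Re with (T * T ^ m)%Re; lra.
Qed.

Section Process.

Variables (n h : nat) (delta : R) (ps : seq ('I_n * 'I_n)) (Gs Hs : nat -> edgeset n).
Let T := thr n h delta.

Hypotheses (HT : (2 < T)%Re) (Hproc : process h delta ps Gs Hs).

Definition saturated_edges_in (G H : edgeset n) : Prop :=
  forall e u, e \in G -> u \in e -> (T - 2 <= INR (deg H u))%Re -> e \in H.

Lemma step_invariant ab G H G' H' :
  step h delta ab G H G' H' ->
  (forall u, INR (deg H u) < T)%Re -> saturated_edges_in G H ->
  (forall u, INR (deg H' u) < T)%Re /\ saturated_edges_in G' H'.
Proof.
rewrite /step; case: ifP => _; last by case=> -> ->.
case=> p [Hsp [HH' HG']] Hdeg Hsat; split; last first.
  move=> e u /HG' [_ Hnot] Hue Hu; apply/negPn/negP => He.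
  by apply: Hnot; split; last exists u.
move=> u; rewrite HH'.
have [Hu | Hu] := Rle_lt_dec (T - 2) (INR (deg H u)).
  rewrite deg_setU_id //; apply/subsetP => w; rewrite in_set => /andP [Hwu Hw].
  rewrite in_set Hwu /=.
  have /andP [/path_edges_sub /subsetP HsubG _] := proj1 Hsp.
  by apply: (Hsat _ u); [apply: HsubG | rewrite set21 | ].
have /leP /le_INR := leq_add (leqnn (deg H u))
  (card_neighbours_path_edges u (shortest_path_uniq Hsp)).
move/(Rle_trans _ _ _ (le_INR _ _ (leP (deg_setU_le _ _ _)))).
by rewrite -plusE plus_INR /=; lra.
Qed.

Lemma process_deg_lt i : i <= size ps -> forall u, (INR (deg (Hs i) u) < T)%Re.
Proof.
case: Hproc => HG0 [HH0 Hstep].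
suff : i <= size ps ->
    (forall u, INR (deg (Hs i) u) < T)%Re /\ saturated_edges_in (Gs i) (Hs i).
  by move=> /[apply] -[].
elim: i => [_ | i IH Hi].
  have Hd u : deg (Hs 0) u = 0.
    by apply/eqP; rewrite cards_eq0 HH0; apply/eqP/setP => w; rewrite !inE andbF.
  by split=> [u | e u _ _]; rewrite Hd /=; lra.
case Ho : (onth ps i) => [ab|]; last by move: Hi; rewrite -onthTE Ho.
by case: (IH (ltnW Hi)); apply: step_invariant (Hstep _ _ Ho).
Qed.

End Process.

Lemma thr_pow n h delta : (1 <= n)%N -> (2 <= h)%N ->
  (thr n h delta ^ (h - 1) = delta ^ (h - 1) * INR n)%Re.
Proof.
move=> Hn Hh; rewrite /thr Rpow_mult_distr; congr (_ * _)%Re.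
rewrite -Rpower_pow; last by apply: exp_pos.
rewrite Rpower_mult Rinv_l ?Rpower_1 //; last first.
  by apply: not_0_INR; apply/eqP; rewrite subn_eq0 -ltnNge.
by apply: lt_0_INR; apply/ltP.
Qed.

Theorem mainTheorem7 (n h : nat) (delta : R)
  (Hn : (1 <= n)%N) (Hh : (2 <= h)%N)
  (Hd0 : (0 < delta)%Re) (Hd1 : (delta < 1)%Re)
  (Hthr : (3 < thr n h delta)%Re)
  (ps : seq ('I_n * 'I_n))
  (Hdist : all (fun ab => ab.1 != ab.2) ps)
  (Huniq : uniq [seq [set ab.1; ab.2] | ab <- ps])
  (Gs Hs : nat -> edgeset n)
  (Hproc : process h delta ps Gs Hs) :
  forall v : 'I_n,
    (INR #|[set u : 'I_n | dist_lt (Hs (size ps)) v u h]|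
       <= 2 * delta ^ (h - 1) * INR n)%Re.
Proof.
move=> v.
have Hdeg u : (INR (deg (Hs (size ps)) u) <= thr n h delta)%Re.
  by left; apply: (process_deg_lt _ Hproc) => //; lra.
have := card_ball_le v Hdeg ltac:(lra) (h - 1).
rewrite thr_pow // subn1 prednK ?(ltnW Hh) // => /Rle_trans; apply; lra.
Qed.
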